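(* Let $\mathbb F\in\{\mathbb R,\mathbb C\}$ and let $\hat U,\tilde U:(0,1]\to GL_n(\mathbb F)$ be continuous. Suppose $\hat U$ contracts the Lie algebra $\mathfrak g$ (structure constants $c^k_{ij}$ in a fixed basis) to the algebra $\hat{\mathfrak g}$ (structure constants $\hat c^k_{ij}$) and $\tilde U$ contracts $\hat{\mathfrak g}$ to the algebra $\tilde{\mathfrak g}$ (structure constants $\tilde c^k_{ij}$). Then there exists a continuous monotonic function $f:(0,1]\to(0,1]$ with $f(\varepsilon)\to0$ as $\varepsilon\to0^+$ such that $\check U_\varepsilon=\hat U_{f(\varepsilon)}\tilde U_\varepsilon$ contracts $\mathfrak g$ to $\tilde{\mathfrak g}$.
   Context: A continuous $U:(0,1]\to GL_n(\mathbb F)$ contracts the algebra with structure constants $c^k_{ij}$ (in a fixed basis) to the algebra with structure constants $c'^{k'}_{i'j'}$ if $\lim_{\varepsilon\to0^+}(U_\varepsilon)^i_{i'}(U_\varepsilon)^j_{j'}(U^{-1}_\varepsilon)^{k'}_kc^k_{ij}=c'^{k'}_{i'j'}$ for all indices (summation over repeated indices). *)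

From HB Require Import structures.
From mathcomp Require Import all_boot all_order all_algebra.
From mathcomp Require Import reals complex.
Set Implicit Arguments. Unset Strict Implicit. Unset Printing Implicit Defensive.
Import Order.TTheory GRing.Theory Num.Theory.
Local Open Scope ring_scope.

Section Defs.
Variable R : realType.

Definition in01 (x : R) : bool := (0 < x) && (x <= 1).

Variable F : numFieldType.

Definition rcont01 (f : R -> R) : Prop :=
  forall x, in01 x -> forall e : R, 0 < e ->
    exists2 d : R, 0 < d & forall y, in01 y -> `|y - x| < d -> `|f y - f x| < e.

Definition mcont01 (n : nat) (U : R -> 'M[F]_n) : Prop :=
  forall x, in01 x -> forall (i j : 'I_n) (e : F), 0 < e ->
    exists2 d : R, 0 < d &
      forall y, in01 y -> `|y - x| < d -> `|U y i j - U x i j| < e.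

Definition GLvalued (n : nat) (U : R -> 'M[F]_n) : Prop :=
  forall x, in01 x -> U x \in unitmx.

Definition lim0 (g : R -> F) (l : F) : Prop :=
  forall e : F, 0 < e -> exists2 d : R, 0 < d &
    forall x, in01 x -> x < d -> `|g x - l| < e.

(* structure constants: c i j k = c^k_{ij} *)
Definition sconst (n : nat) := 'I_n -> 'I_n -> 'I_n -> F.

(* (U_eps)^i_{i'} (U_eps)^j_{j'} (U_eps^{-1})^{k'}_k c^k_{ij};
   the matrix entry U i i' is (U)^i_{i'} *)
Definition transformed (n : nat) (U : R -> 'M[F]_n) (c : sconst n)
    (i' j' k' : 'I_n) (eps : R) : F :=
  \sum_(i < n) \sum_(j < n) \sum_(k < n)
     U eps i i' * U eps j j' * invmx (U eps) k' k * c i j k.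

Definition contracts (n : nat) (U : R -> 'M[F]_n) (c c' : sconst n) : Prop :=
  forall i' j' k' : 'I_n, lim0 (transformed U c i' j' k') (c' i' j' k').

Definition is_lie (n : nat) (c : sconst n) : Prop :=
  (forall i j k, c i j k = - c j i k) /\
  (forall i j k m, \sum_(l < n) (c i j l * c l k m + c j k l * c l i m
                                 + c k i l * c l j m) = 0).

Definition composition_property : Prop :=
  forall (n : nat) (c ch ct : sconst n) (Uh Ut : R -> 'M[F]_n),
    is_lie c ->
    mcont01 Uh -> GLvalued Uh -> mcont01 Ut -> GLvalued Ut ->
    contracts Uh c ch -> contracts Ut ch ct ->
    exists f : R -> R,
      [/\ rcont01 f,
          forall x, in01 x -> in01 (f x),
          {in in01 &, forall x y, x <= y -> f x <= f y}
            \/ {in in01 &, forall x y, x <= y -> f y <= f x},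
          (forall e : R, 0 < e -> exists2 d : R, 0 < d &
              forall x, in01 x -> x < d -> `|f x| < e) &
          contracts (fun eps => Uh (f eps) *m Ut eps) c ct].

End Defs.

(* Write c.A for [basis_change A c], the structure constants c expressed in
   the basis given by the columns of A; then [transformed U c _ _ _ e] is
   c.(U e) and c.(A B) = (c.A).B.  On [1/(m+1), 1] the entries of Ut and of
   its inverse are bounded by some B_m, so Ut t moves structure constants that
   are eta apart to ones at most n^3 B_m^3 eta apart.  As c.(Uh s) -> ch, there
   is D_m > 0 such that c.(Uh s) is within 1/((m+1)(n^3 B_m^3 + 1)) of ch for
   s < D_m.  Any continuous nondecreasing f with 0 < f e < D_m, m = floor(1/e),
   then makes c.(Uh (f e) Ut e) = (c.(Uh (f e))).(Ut e) lie within 1/(m+1) of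
   ch.(Ut e), which tends to ct.  Such an f is obtained by inf-convolving the
   positive nondecreasing step function min(e, min_(k <= m) D_k / 2) with
   t |-> max(0, t). *)

From HB Require Import structures.
From mathcomp Require Import all_boot all_order all_algebra.
From mathcomp Require Import reals complex.
From mathcomp Require Import boolp classical_sets functions ring lra.
Set Implicit Arguments. Unset Strict Implicit. Unset Printing Implicit Defensive.
Import Order.TTheory GRing.Theory Num.Theory Num.Def.
Local Open Scope ring_scope.
Local Open Scope classical_set_scope.

Section Continuity.
Variables (R : realType) (F : numFieldType).

Definition cont01_at (h : R -> F) (x : R) := forall e : F, 0 < e ->
  exists2 d : R, 0 < d & forall y, in01 y -> `|y - x| < d -> `|h y - h x| < e.

(* [F] is only partially ordered, so [minr a b] is no common lower bound. *)
Lemma exists_pos_le2 (a b : F) : 0 < a -> 0 < b ->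
  exists2 c : F, 0 < c & (c <= a) && (c <= b).
Proof.
move=> a0 b0; have ab0 : 0 < a + b by rewrite addr_gt0.
exists (a * b / (a + b)); first by rewrite divr_gt0 // mulr_gt0.
rewrite !ler_pdivrMr // ler_pM2l // [a * b]mulrC ler_pM2l //.
by rewrite lerDl lerDr !ltW.
Qed.

Lemma cont01_at_cst (a : F) x : cont01_at (fun=> a) x.
Proof. by move=> e e0; exists 1 => // y _ _; rewrite subrr normr0. Qed.

Lemma eq_in_cont01_at (g h : R -> F) x :
  in01 x -> (forall y, in01 y -> g y = h y) -> cont01_at h x -> cont01_at g x.
Proof.
move=> x01 gh ch e /ch[d d0 Hd]; exists d => // y y01 yx.
by rewrite !gh //; apply: Hd.
Qed.

Lemma cont01_atD (g h : R -> F) x : cont01_at g x -> cont01_at h x ->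
  cont01_at (fun t => g t + h t) x.
Proof.
move=> cg ch e e0; have e20 : 0 < e / 2 by rewrite divr_gt0.
have [d1 d10 H1] := cg _ e20; have [d2 d20 H2] := ch _ e20.
exists (minr d1 d2) => [|y y01]; first by rewrite lt_min d10 d20.
rewrite lt_min => /andP[y1 y2] /=; rewrite opprD addrACA.
by rewrite (le_lt_trans (ler_normD _ _)) // [e]splitr ltrD ?H1 ?H2.
Qed.

Lemma cont01_atM (g h : R -> F) x : cont01_at g x -> cont01_at h x ->
  cont01_at (fun t => g t * h t) x.
Proof.
move=> cg ch e e0; pose K := `|g x| + `|h x| + 1.
have K0 : 0 < K by rewrite ltr_wpDl // addr_ge0.
have [r r0 /andP[r1 rK]] := exists_pos_le2 ltr01 (divr_gt0 e0 K0).
have [d1 d10 H1] := cg _ r0; have [d2 d20 H2] := ch _ r0.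
exists (minr d1 d2) => [|y y01]; first by rewrite lt_min d10 d20.
rewrite lt_min => /andP[/(H1 _ y01) gyx /(H2 _ y01) hyx] /=.
have -> : g y * h y - g x * h x =
  (g y - g x) * (h y - h x) + (g y - g x) * h x + g x * (h y - h x) by ring.
have r2 : `|g y - g x| * `|h y - h x| < r.
  by apply: lt_le_trans (ler_piMr (ltW r0) r1); rewrite ltr_pM.
apply: lt_le_trans (_ : _ < r * K) _; last by rewrite -ler_pdivlMr.
rewrite (_ : r * K = r + (r * `|h x| + `|g x| * r)); last by rewrite /K; ring.
rewrite -addrA; apply: le_lt_trans (ler_normD _ _) _; rewrite normrM ltr_leD //.
apply: le_trans (ler_normD _ _) _.
by rewrite !normrM lerD // ?ler_wpM2l ?ler_wpM2r // ltW.
Qed.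

Lemma cont01_at_norm (g : R -> F) x : cont01_at g x -> cont01_at (fun t => `|g t|) x.
Proof.
move=> cg e /cg[d d0 Hd]; exists d => // y y01 yx.
exact: le_lt_trans (ler_dist_dist _ _) (Hd _ y01 yx).
Qed.

Lemma cont01_atV (g : R -> F) x : g x != 0 -> cont01_at g x ->
  cont01_at (fun t => (g t)^-1) x.
Proof.
move=> gx0 cg e e0; have gx : 0 < `|g x| by rewrite normr_gt0.
have [r r0 /andP[r1 r2]] := exists_pos_le2 (divr_gt0 gx (@ltr0Sn F 1))
  (mulr_gt0 e0 (divr_gt0 (exprn_gt0 2 gx) (@ltr0Sn F 1))).
have [d d0 Hd] := cg _ r0; exists d => // y y01 /(Hd _ y01) gyx.
have gy : `|g x| / 2 <= `|g y|.
  rewrite -(lerD2l (`|g x| / 2)) -splitr -lerBlDr.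
  by apply: le_trans (lerB_dist _ _) _; rewrite distrC ltW // (lt_le_trans gyx).
have gy0 : g y != 0 by rewrite -normr_gt0 (lt_le_trans _ gy) // divr_gt0.
have -> : (g y)^-1 - (g x)^-1 = (g x - g y) / (g y * g x) by field; apply/andP.
rewrite normrM normfV normrM ltr_pdivrMr ?mulr_gt0 ?normr_gt0 // distrC.
apply: lt_le_trans gyx (le_trans r2 _); rewrite ler_pM2l //.
by rewrite expr2 mulrAC; apply: ler_wpM2r.
Qed.

Lemma cont01_at_sum (I : Type) (s : seq I) (P : pred I) (G : I -> R -> F) x :
  (forall i, cont01_at (G i) x) -> cont01_at (fun t => \sum_(i <- s | P i) G i t) x.
Proof.
move=> cG; rewrite -fct_sumE.
apply: (big_ind (cont01_at^~ x)) => //; first exact: cont01_at_cst.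
by move=> g h cg ch; exact: (cont01_atD cg ch).
Qed.

Lemma cont01_at_prod (I : Type) (s : seq I) (P : pred I) (G : I -> R -> F) x :
  (forall i, cont01_at (G i) x) -> cont01_at (fun t => \prod_(i <- s | P i) G i t) x.
Proof.
move=> cG; rewrite -fct_prodE.
apply: (big_ind (cont01_at^~ x)) => //; first exact: cont01_at_cst.
by move=> g h cg ch; exact: (cont01_atM cg ch).
Qed.

Lemma cont01_at_det n (M : R -> 'M[F]_n) x :
  (forall i j, cont01_at (fun t => M t i j) x) -> cont01_at (fun t => \det (M t)) x.
Proof.
move=> cM; apply: cont01_at_sum => s.
by apply: cont01_atM; [exact: cont01_at_cst | exact: cont01_at_prod].
Qed.

Lemma cont01_at_invmx n (M : R -> 'M[F]_n) x : in01 x ->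
  (forall y, in01 y -> M y \in unitmx) ->
  (forall i j, cont01_at (fun t => M t i j) x) ->
  forall i j, cont01_at (fun t => invmx (M t) i j) x.
Proof.
move=> x01 uM cM i j.
pose minor t := \det (row' j (col' i (M t))).
apply: (@eq_in_cont01_at _ (fun t => (\det (M t))^-1 * ((-1) ^+ (j + i) * minor t))) => //.
  by move=> y y01; rewrite /invmx uM // !mxE.
apply: cont01_atM.
  by apply: cont01_atV (cont01_at_det cM); rewrite -unitfE -unitmxE uM.
apply: cont01_atM; first exact: cont01_at_cst.
apply: cont01_at_det => k l.
by rewrite (_ : (fun t => _) = fun t => M t (lift j k) (lift i l)) // funeqE => t; rewrite !mxE.
Qed.
End Continuity.

Section Boundedness.
Variables (R : realType) (F : numFieldType).

Lemma cont01_bounded (h : R -> F) (a : R) : 0 < a -> a <= 1 ->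
  (forall x, in01 x -> cont01_at h x) ->
  exists B : F, forall t, a <= t -> t <= 1 -> `|h t| <= B.
Proof.
move=> a0 a1 ch.
pose S : set R := [set u | a <= u <= 1 /\
  exists B : F, forall t, a <= t -> t <= u -> `|h t| <= B].
have Sa : S a.
  split; first by rewrite lexx a1.
  by exists `|h a| => t a_t t_a; rewrite (@le_anti _ _ t a) ?a_t ?t_a.
have S0 : S !=set0 by exists a.
have supS : has_sup S by split => //; exists 1 => u [/andP[]].
pose s := sup S.
have as_ : a <= s by apply: sup_upper_bound.
have s01 : in01 s.
  by rewrite /in01 (lt_le_trans a0 as_) ge_sup // => u [/andP[]].
have [d d0 Hd] := ch s s01 1 ltr01.
have [u [/andP[au _] [B HB]] su] := sup_adherent d0 supS; rewrite -/s in su.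
pose v := minr (s + d / 2) 1.
have HBv t : a <= t -> t <= v -> `|h t| <= B + (`|h s| + 1).
  move=> a_t tv; have B0 : 0 <= B by apply: le_trans (HB a _ au).
  have [tu|ut] := lerP t u; first by rewrite (le_trans (HB t a_t tu)) // lerDl addr_ge0.
  have t01 : in01 t.
    by rewrite /in01 (lt_le_trans a0 a_t) (le_trans tv) // ge_min lexx orbT.
  have ts : `|t - s| < d.
    have : t <= s + d / 2 by apply: le_trans tv _; rewrite ge_min lexx.
    move: su ut => /lt_trans/[apply] ? ?; rewrite ltr_norml; apply/andP; split; lra.
  apply: le_trans (_ : `|h t| <= `|h s| + 1) _; last by rewrite lerDr.
  by rewrite -lerBlDl; apply: le_trans (lerB_dist _ _) _; exact/ltW/Hd.
have Sv : S v.
  split; last by exists (B + (`|h s| + 1)).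
  by rewrite /v ge_min lexx orbT andbT le_min a1 andbT; lra.
have v1 : v = 1.
  have : v <= s by apply: sup_upper_bound.
  by rewrite /v; case: (lerP (s + d / 2) 1) => // _ ?; lra.
by exists (B + (`|h s| + 1)) => t a_t t1; apply: HBv; rewrite ?v1.
Qed.
End Boundedness.

Lemma invmx_mul (K : comUnitRingType) n (A B : 'M[K]_n) :
  A \in unitmx -> B \in unitmx -> invmx (A *m B) = invmx B *m invmx A.
Proof.
move=> uA uB; have uAB : A *m B \in unitmx by rewrite unitmx_mul uA.
have AB_inv : (A *m B) *m (invmx B *m invmx A) = 1%:M.
  by rewrite mulmxA -(mulmxA A) mulmxV // mulmx1 mulmxV.
by rewrite -[RHS]mul1mx -(mulVmx uAB) -mulmxA AB_inv mulmx1.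
Qed.

Lemma exchange_big3 (V : nmodType) n (G : 'I_n -> 'I_n -> 'I_n -> 'I_n -> V) :
  \sum_i \sum_j \sum_k \sum_l G i j k l = \sum_l \sum_i \sum_j \sum_k G i j k l.
Proof.
under eq_bigr do under eq_bigr do rewrite exchange_big.
by under eq_bigr do rewrite exchange_big; rewrite exchange_big.
Qed.

Section BasisChange.
Variable F : numFieldType.

Definition basis_change n (A : 'M[F]_n) (c : sconst F n) : sconst F n :=
  fun i' j' k' => \sum_(i < n) \sum_(j < n) \sum_(k < n)
    A i i' * A j j' * invmx A k' k * c i j k.

Lemma basis_changeM n (A B : 'M[F]_n) (c : sconst F n) i' j' k' :
  A \in unitmx -> B \in unitmx ->
  basis_change (A *m B) c i' j' k' = basis_change B (basis_change A c) i' j' k'.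
Proof.
move=> uA uB; rewrite /basis_change (invmx_mul uA uB).
have expand i j k :
    (A *m B) i i' * (A *m B) j j' * (invmx B *m invmx A) k' k * c i j k =
  \sum_a \sum_b \sum_d (B a i' * B b j' * invmx B k' d *
     (A i a * A j b * invmx A d k * c i j k)).
  rewrite !mxE !mulr_suml; apply: eq_bigr => a _.
  rewrite mulr_sumr !mulr_suml; apply: eq_bigr => b _.
  by rewrite mulr_sumr !mulr_suml; apply: eq_bigr => d _; ring.
under eq_bigr do under eq_bigr do under eq_bigr do rewrite expand.
rewrite exchange_big3; under eq_bigr do rewrite exchange_big3.
under eq_bigr do under eq_bigr do rewrite exchange_big3.
apply: eq_bigr => a _; apply: eq_bigr => b _; apply: eq_bigr => d _.
rewrite mulr_sumr; apply: eq_bigr => i _.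
rewrite mulr_sumr; apply: eq_bigr => j _.
by rewrite mulr_sumr.
Qed.

Lemma basis_changeB n (A : 'M[F]_n) (c1 c2 : sconst F n) i j k :
  basis_change A (fun a b d => c1 a b d - c2 a b d) i j k =
  basis_change A c1 i j k - basis_change A c2 i j k.
Proof.
rewrite /basis_change -sumrB; apply: eq_bigr => a _.
rewrite -sumrB; apply: eq_bigr => b _.
by rewrite -sumrB; apply: eq_bigr => d _; rewrite mulrBr.
Qed.

Lemma norm_basis_change_le n (A : 'M[F]_n) (c : sconst F n) (B E : F) i j k :
  0 <= B -> (forall a b, `|A a b| <= B) -> (forall a b, `|invmx A a b| <= B) ->
  (forall a b d, `|c a b d| <= E) ->
  `|basis_change A c i j k| <= (n ^ 3)%:R * B ^+ 3 * E.
Proof.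
move=> B0 HA HAV Hc; have E0 : 0 <= E := le_trans (normr_ge0 _) (Hc i j k).
rewrite /basis_change; apply: (le_trans (ler_norm_sum _ _ _)).
apply: le_trans (_ : _ <= \sum_(a < n) \sum_(b < n) \sum_(d < n) (B ^+ 3 * E)) _.
  apply: ler_sum => a _; apply: (le_trans (ler_norm_sum _ _ _)).
  apply: ler_sum => b _; apply: (le_trans (ler_norm_sum _ _ _)).
  apply: ler_sum => d _; rewrite !normrM 3!exprSr expr0 mul1r.
  by rewrite !ler_pM ?mulr_ge0.
rewrite !sumr_const !card_ord -!mulrnA.
suff -> : B ^+ 3 * E *+ (n * (n * n)) = (n ^ 3)%:R * B ^+ 3 * E by [].
by rewrite -mulr_natl; ring.
Qed.

Lemma basis_change_dist_le n (A : 'M[F]_n) (c1 c2 : sconst F n) (B E : F) i j k :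
  0 <= B -> (forall a b, `|A a b| <= B) -> (forall a b, `|invmx A a b| <= B) ->
  (forall a b d, `|c1 a b d - c2 a b d| <= E) ->
  `|basis_change A c1 i j k - basis_change A c2 i j k| <= (n ^ 3)%:R * B ^+ 3 * E.
Proof. by move=> *; rewrite -basis_changeB norm_basis_change_le. Qed.
End BasisChange.

Section InfConvolution.
Variables (R : realType) (h : R -> R).
Hypothesis h_ge0 : forall t, in01 t -> 0 <= h t.

(* The largest 1-Lipschitz nondecreasing minorant of [h] on (0,1]. *)
Definition inf_conv (x : R) : R :=
  inf [set h t + maxr 0 (x - t) | t in [set t | in01 t]].

Lemma inf_conv_le x t : in01 t -> inf_conv x <= h t + maxr 0 (x - t).
Proof.
move=> t01; apply: ge_inf; last by exists t.
by exists 0 => _ [u u01 <-]; rewrite addr_ge0 ?h_ge0 ?le_max ?lexx.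
Qed.

Lemma inf_conv_ge x L : (forall t, in01 t -> L <= h t + maxr 0 (x - t)) ->
  L <= inf_conv x.
Proof.
move=> hL; apply: lb_le_inf => [|_ [t t01 <-]]; last exact: hL.
by exists (h 1 + maxr 0 (x - 1)), 1 => //; rewrite /= /in01 ltr01 lexx.
Qed.

Lemma inf_conv_nondecreasing x y : x <= y -> inf_conv x <= inf_conv y.
Proof.
move=> xy; apply: inf_conv_ge => t t01; apply: le_trans (inf_conv_le x t01) _.
by rewrite lerD2l le_max2 // lerD2r.
Qed.

Lemma inf_conv_lipschitz x y : `|inf_conv x - inf_conv y| <= `|x - y|.
Proof.
have half u v : inf_conv u - `|u - v| <= inf_conv v.
  apply: inf_conv_ge => t t01; rewrite lerBlDr.
  apply: le_trans (inf_conv_le u t01) _; rewrite -addrA lerD2l ge_max.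
  have m0 : 0 <= maxr 0 (v - t) by rewrite le_max lexx.
  have mvt : v - t <= maxr 0 (v - t) by rewrite le_max lexx orbT.
  by have := ler_norm (u - v); rewrite addr_ge0 //=; lra.
have := half x y; have := half y x; rewrite (distrC y x) => ? ?.
by rewrite ler_norml; apply/andP; split; lra.
Qed.

Lemma inf_conv_gt0 x : in01 x -> (forall t, in01 t -> 0 < h t) ->
  {in @in01 R &, forall s t, s <= t -> h s <= h t} -> 0 < inf_conv x.
Proof.
move=> /andP[x0 x1] h_gt0 h_mono; have x201 : in01 (x / 2) by rewrite /in01; lra.
pose L := minr (x / 2) (h (x / 2)).
have L0 : 0 < L by rewrite lt_min divr_gt0 ?h_gt0.
have Lx : L <= x / 2 by rewrite ge_min lexx.
apply: lt_le_trans L0 (inf_conv_ge _) => t t01.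
have := h_ge0 t01; have : x - t <= maxr 0 (x - t) by rewrite le_max lexx orbT.
have : 0 <= maxr 0 (x - t) by rewrite le_max lexx.
have [tx|] := lerP (x / 2) t; last lra.
have : L <= h t by rewrite ge_min (h_mono _ _ x201 t01 tx) orbT.
lra.
Qed.
End InfConvolution.

Section Schedule.
Variable R : realType.

Definition level (t : R) : nat := Num.truncn t^-1.

Lemma in01_invS (m : nat) : in01 ((m.+1%:R : R)^-1).
Proof. by rewrite /in01 invr_gt0 ltr0n /= invf_le1 ?ltr0n // ler1n. Qed.

Lemma level_lt t : in01 t -> ((level t).+1%:R : R)^-1 < t.
Proof.
case/andP=> t0 _; rewrite -[X in _ < X]invrK ltf_pV2 ?posrE ?invr_gt0 ?ltr0n //.
exact: truncnS_gt.
Qed.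

Lemma level_nonincreasing s t : in01 s -> in01 t -> s <= t -> (level t <= level s)%N.
Proof. by case/andP=> s0 _ /andP[t0 _] st; apply: le_truncn; rewrite lef_pV2. Qed.

Lemma level_gt t (m : nat) : in01 t -> t < (m.+1%:R)^-1 -> (m < level t)%N.
Proof.
case/andP=> t0 _ tm; rewrite ltnNge truncn_le_nat -leNgt.
by rewrite -[m.+1%:R]invrK lef_pV2 ?posrE ?invr_gt0 ?ltr0n // ltW.
Qed.

Definition running_min (D : nat -> R) (m : nat) : R := \big[minr/1]_(k < m.+1) D k.

Lemma running_min_gt0 D m : (forall k, 0 < D k) -> 0 < running_min D m.
Proof. by move=> D0; apply/bigmin_gtP; split. Qed.

Lemma running_min_le D m : running_min D m <= D m.
Proof. exact: (bigmin_le _ ord_max). Qed.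

Lemma running_min_nonincreasing D m m' :
  (m <= m')%N -> running_min D m' <= running_min D m.
Proof. by move=> mm'; rewrite /running_min -!(big_mkord xpredT) le_bigmin_nat. Qed.

Lemma exists_schedule (D : nat -> R) : (forall m, 0 < D m) ->
  exists f : R -> R,
    [/\ rcont01 f, forall x, in01 x -> in01 (f x),
        {in @in01 R &, forall x y, x <= y -> f x <= f y},
        (forall e : R, 0 < e -> exists2 d : R, 0 < d &
           forall x, in01 x -> x < d -> `|f x| < e) &
        forall x, in01 x -> f x < D (level x)].
Proof.
move=> D0; pose delta x := minr x (running_min D (level x) / 2).
have delta_gt0 x : in01 x -> 0 < delta x.
  by case/andP=> x0 _; rewrite lt_min x0 divr_gt0 // running_min_gt0.
have delta_mono : {in @in01 R &, forall s t, s <= t -> delta s <= delta t}.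
  move=> s u s01 u01 su; rewrite le_min !ge_min su /= ler_pM2r ?invr_gt0 //.
  by rewrite running_min_nonincreasing ?orbT // level_nonincreasing.
have delta_ge0 t : in01 t -> 0 <= delta t by move=> /delta_gt0/ltW.
pose f := inf_conv delta.
have f_le x : in01 x -> f x <= delta x.
  by move=> x01; have := inf_conv_le delta_ge0 x x01; rewrite subrr maxxx addr0.
have f_gt0 x : in01 x -> 0 < f x by move=> x01; apply: inf_conv_gt0.
have f_lex x : in01 x -> f x <= x.
  by move=> x01; rewrite (le_trans (f_le x x01)) // ge_min lexx.
exists f; split.
- move=> x _ e e0; exists e => // y _ yx.
  exact: le_lt_trans (inf_conv_lipschitz delta_ge0 y x) yx.
- by move=> x x01; rewrite /in01 f_gt0 //= (le_trans (f_lex x x01)) //; case/andP: x01.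
- by move=> x y _ _; apply: inf_conv_nondecreasing.
- move=> e e0; exists e => // x x01 xe.
  by rewrite gtr0_norm ?f_gt0 // (le_lt_trans (f_lex x x01)).
- move=> x x01; apply: le_lt_trans (f_le x x01) _; rewrite gt_min; apply/orP; right.
  by rewrite ltr_pdivrMr // (le_lt_trans (running_min_le _ _)) // ltr_pMr ?ltr1n.
Qed.
End Schedule.

Section Composition.
Variables (R : realType) (F : numFieldType).

Lemma GLvalued_bounded n (U : R -> 'M[F]_n) (a : R) : mcont01 U -> GLvalued U ->
  0 < a -> a <= 1 -> exists B : F, 0 <= B /\ forall t, a <= t -> t <= 1 ->
    forall i j, `|U t i j| <= B /\ `|invmx (U t) i j| <= B.
Proof.
move=> cU GU a0 a1.
pose E t i j := `|U t i j| + `|invmx (U t) i j|.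
have E_ge0 t i j : 0 <= E t i j by rewrite addr_ge0.
have g_ge0 t : 0 <= \sum_i \sum_j E t i j by do 2 (apply: sumr_ge0 => ? _).
have cg x : in01 x -> cont01_at (fun t => \sum_i \sum_j E t i j) x.
  move=> x01; apply: cont01_at_sum => i; apply: cont01_at_sum => j.
  apply: cont01_atD; apply: cont01_at_norm; first exact: cU.
  exact: cont01_at_invmx x01 GU (cU x x01) i j.
have [B HB] := cont01_bounded a0 a1 cg.
exists B; split; first exact: le_trans (normr_ge0 _) (HB 1 a1 (lexx _)).
move=> t a_t t1 i j; suff : E t i j <= B.
  by move=> EB; split; apply: le_trans EB; rewrite ?lerDl ?lerDr.
apply: le_trans (HB t a_t t1).
rewrite (ger0_norm (g_ge0 t)) (bigD1 i) //= (bigD1 j) //= -addrA lerDl.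
by apply: addr_ge0; do ?[apply: sumr_ge0 => ? _]; exact: E_ge0.
Qed.

Lemma contracts_uniform n (U : R -> 'M[F]_n) (c c' : sconst F n) :
  contracts U c c' -> forall e : F, 0 < e -> exists2 d : R, 0 < d &
    forall x, in01 x -> x < d -> forall i j k, `|transformed U c i j k x - c' i j k| < e.
Proof.
move=> cU e e0.
have /choice[d Hd] (p : 'I_n * 'I_n * 'I_n) : exists d : R, 0 < d /\
    forall x, in01 x -> x < d ->
      `|transformed U c p.1.1 p.1.2 p.2 x - c' p.1.1 p.1.2 p.2| < e.
  by case: p => [[i j] k]; have [d d0 Hd] := cU i j k e e0; exists d.
exists (\big[minr/1]_p d p); first by apply/bigmin_gtP; split => // p _; case: (Hd p).
move=> x x01 xd i j k; case: (Hd (i, j, k)) => _; apply => //.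
exact: lt_le_trans xd (bigmin_le _ (i, j, k) _).
Qed.

Lemma archimedean_invS_lt : Num.archimedean_axiom F ->
  forall e : F, 0 < e -> exists m : nat, (m.+1%:R)^-1 < e.
Proof.
move=> archi e e0; have [m hm] := archi e^-1; exists m.
rewrite -[e]invrK ltf_pV2 ?posrE ?invr_gt0 ?ltr0n //.
rewrite ger0_norm ?invr_ge0 ?ltW // in hm.
by apply: lt_le_trans hm _; rewrite ler_nat.
Qed.

Lemma mulr_invMD1_le (K : F) (m : nat) : 0 <= K ->
  K * (m.+1%:R * (K + 1))^-1 <= (m.+1%:R)^-1.
Proof.
move=> K0; rewrite invfM mulrCA ler_piMr ?invr_ge0 ?ler0n //.
by rewrite ler_pdivrMr ?ltr_wpDl // mul1r lerDl.
Qed.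

Lemma contracts_mulmx n (V W : R -> 'M[F]_n) (c ch ct : sconst F n) :
  Num.archimedean_axiom F -> GLvalued V -> GLvalued W -> contracts W ch ct ->
  (forall x, in01 x -> forall i j k,
     `|basis_change (W x) (basis_change (V x) c) i j k - basis_change (W x) ch i j k|
       <= ((level x).+1%:R)^-1) ->
  contracts (fun x => V x *m W x) c ct.
Proof.
move=> archi GV GW cW cVW i j k e e0; have e20 : 0 < e / 2 by rewrite divr_gt0.
have [d d0 Hd] := cW i j k _ e20; have [M Me] := archimedean_invS_lt archi e20.
exists (minr d (M.+1%:R)^-1) => [|x x01]; first by rewrite lt_min d0 invr_gt0 ltr0n.
rewrite lt_min => /andP[xd /(level_gt x01) Mx].
rewrite /transformed -/(basis_change _ _ _ _ _) basis_changeM ?GV ?GW //.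
apply: le_lt_trans (ler_distD (basis_change (W x) ch i j k) _ _) _.
rewrite [e]splitr addrC ltr_leD ?Hd // (le_trans (cVW x x01 i j k)) // ltW //.
by apply: le_lt_trans Me; rewrite lef_pV2 ?posrE ?ltr0n // ler_nat ltnW.
Qed.

Theorem archimedean_composition_property :
  Num.archimedean_axiom F -> composition_property R F.
Proof.
move=> archi n c ch ct Uh Ut _ _ GUh cUt GUt cUh cUt'.
have /choice[B HB] (m : nat) : exists B : F, 0 <= B /\
    forall t, (m.+1%:R)^-1 <= t -> t <= 1 ->
      forall i j, `|Ut t i j| <= B /\ `|invmx (Ut t) i j| <= B.
  by have /andP[a0 a1] := in01_invS R m; apply: GLvalued_bounded.
pose err m : F := (m.+1%:R * ((n ^ 3)%:R * B m ^+ 3 + 1))^-1.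
have err_gt0 m : 0 < err m.
  by rewrite invr_gt0 mulr_gt0 ?ltr0n // ltr_wpDl ?mulr_ge0 ?exprn_ge0 ?(HB m).1.
have /choice[D HD] (m : nat) : exists D : R, 0 < D /\ forall x, in01 x -> x < D ->
    forall i j k, `|transformed Uh c i j k x - ch i j k| < err m.
  by have [d d0 Hd] := contracts_uniform cUh (err_gt0 m); exists d.
have [f [f_cont f01 f_mono f_lim f_D]] := exists_schedule (fun m => (HD m).1).
exists f; split => //; first by left.
apply: contracts_mulmx archi (fun x x01 => GUh _ (f01 x x01)) GUt cUt' _ => x x01 i j k.
have [B0 /(_ x (ltW (level_lt x01)) (proj2 (andP x01))) HBx] := HB (level x).
have K0 : 0 <= (n ^ 3)%:R * B (level x) ^+ 3 :> F by rewrite mulr_ge0 ?exprn_ge0.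
apply: le_trans (mulr_invMD1_le _ K0).
apply: basis_change_dist_le => // [a b|a b|a b d]; first exact: (HBx a b).1.
  exact: (HBx a b).2.
exact/ltW/((HD _).2 _ (f01 x x01) (f_D x x01)).
Qed.
End Composition.

Lemma real_archimedean (R : realType) : Num.archimedean_axiom R.
Proof. by move=> x; exists (Num.bound `|x|); apply: archi_boundP. Qed.

Lemma complex_archimedean (R : realType) : Num.archimedean_axiom R[i].
Proof.
move=> x; have [m hm] := real_archimedean (complex.Re `|x|); exists m.
rewrite -(rmorph_nat (real_complex R)) ltcE /= eqxx.
exact: le_lt_trans (ler_norm _) hm.
Qed.

Theorem mainTheorem11 (R : realType) :
  composition_property R R /\ composition_property R (complex R).
Proof.
split; apply: archimedean_composition_property.
  exact: real_archimedean.
exact: complex_archimedean.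
Qed.
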